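(* Let $\alpha = (\alpha_{rs})_{r,s=1}^k$ be a $k\times k$ doubly stochastic matrix and let $\beta = \frac{1}{k}\max_{\pi}\sum_{r=1}^k \alpha_{r,\pi(r)}$, where the maximum is over all permutations $\pi$ of $\{1,\dots,k\}$. Then \[ |\alpha|^2 := \sum_{r,s}\alpha_{rs}^2 \le k\beta . \]
   Context: A doubly stochastic matrix has nonnegative entries with every row sum and column sum equal to $1$. $|\alpha|$ denotes the Frobenius norm. *)

From mathcomp Require Import all_boot all_order all_algebra all_fingroup.
Set Implicit Arguments. Unset Strict Implicit. Unset Printing Implicit Defensive.
Import Order.TTheory GRing.Theory Num.Theory.
Local Open Scope ring_scope.

Definition doubly_stochastic (R : realFieldType) (k : nat) (A : 'M[R]_k) : Prop :=
  (forall i j, 0 <= A i j) /\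
  (forall i, \sum_j A i j = 1) /\
  (forall j, \sum_i A i j = 1).

(* beta = (1/k) max_pi sum_r A_{r, pi(r)}.  The max is over the nonempty set of
   permutations of nonnegative quantities, so taking it with neutral element 0 is exact. *)
Definition beta (R : realFieldType) (k : nat) (A : 'M[R]_k) : R :=
  k%:R^-1 * \big[Num.max/0]_(s : 'S_k) \sum_(r < k) A r (s r).

Definition frob2 (R : realFieldType) (k : nat) (A : 'M[R]_k) : R :=
  \sum_(r < k) \sum_(s < k) A r s ^+ 2.

From mathcomp Require Import all_boot all_order all_algebra all_fingroup.
From mathcomp Require Import zify lra.
Set Implicit Arguments. Unset Strict Implicit. Unset Printing Implicit Defensive.
Import Order.TTheory GRing.Theory Num.Theory.
Local Open Scope ring_scope.

(* Over doubly stochastic Y, the linear form Y |-> <A, Y> is bounded by its value at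
   some permutation matrix; for Y = A this reads |A|^2 <= max_pi sum_r A_{r,pi(r)} = k beta.
   To reach a permutation matrix, move Y along a direction D with zero row and column
   sums, supported on the fractional entries of Y and not decreasing <A, Y>, until one
   more entry becomes 0 or 1. Such a D exists because every line through a fractional
   entry contains another one: so on the lines met by the fractional support there are at
   most as many margin equations as unknowns, and one of these equations is redundant. *)

Lemma nonzero_left_kernel (F : fieldType) p q (M : 'M[F]_(p, q)) :
  (q < p)%N -> exists2 d : 'rV_p, d != 0 & d *m M = 0.
Proof.
move=> lt_qp; have : kermx M != 0.
  rewrite -mxrank_eq0 mxrank_ker subn_eq0 -ltnNge.
  exact: leq_ltn_trans (rank_leq_col M) lt_qp.
by case/rowV0Pn => d /sub_kermxP dM0 d_neq0; exists d.
Qed.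

Lemma double_card_imset_le (T U : finType) (f : T -> U) (A : {set T}) :
  {in A, forall x, exists2 y, y \in A & (y != x) && (f y == f x)} ->
  (2 * #|f @: A| <= #|A|)%N.
Proof.
move=> partner; rewrite -[X in (_ <= X)%N]sum1_card.
rewrite (partition_big f (mem (f @: A))) => [|x xA]; last exact: imset_f.
rewrite mulnC -sum_nat_const leq_sum // => _ /imsetP[x xA ->].
have [y yA /andP[y_neq_x fy]] := partner x xA.
by rewrite (bigD1 x) ?xA ?eqxx //= (bigD1 y) //= yA y_neq_x fy.
Qed.

Section IncidenceMatrix.
Variables (R : fieldType) (T J : finType) (S : {set T}) (g : T -> J) (L : {set J}).

Definition incidence_mx : 'M[R]_(#|S|, #|L|) :=
  \matrix_(i, a) (g (enum_val i) == enum_val a)%:R.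

Lemma incidence_mx_ker (d : 'rV_#|S|) j :
  d *m incidence_mx = 0 -> j \notin (g @: S) :\: L ->
  \sum_(i | g (enum_val i) == j) d 0 i = 0.
Proof.
move=> dN0; rewrite in_setD negb_and negbK; case: (boolP (j \in L)) => [jL _|_ jgS].
  transitivity ((d *m incidence_mx) 0 (enum_rank_in jL j)); last by rewrite dN0 mxE.
  rewrite mxE big_mkcond; apply: eq_bigr => i _.
  by rewrite mxE enum_rankK_in //; case: eqP; rewrite ?mulr1 ?mulr0.
by rewrite big_pred0 // => i; apply: contraNF jgS => /eqP <-; exact/imset_f/enum_valP.
Qed.

End IncidenceMatrix.

Definition zero_margins (R : zmodType) m n (D : 'M[R]_(m, n)) : Prop :=
  (forall r, \sum_s D r s = 0) /\ (forall s, \sum_r D r s = 0).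

Lemma exists_zero_margins_on (R : fieldType) m n (S : {set 'I_m * 'I_n}) :
  S != set0 ->
  {in S, forall p, exists2 q, q \in S & (q != p) && (q.1 == p.1)} ->
  {in S, forall p, exists2 q, q \in S & (q != p) && (q.2 == p.2)} ->
  exists D : 'M[R]_(m, n),
    [/\ D != 0, forall r s, D r s != 0 -> (r, s) \in S & zero_margins D].
Proof.
move=> /set0Pn[p0 p0S] row_partner col_partner.
(* The column equation at p0.2 is omitted: row and column sums have the same total. *)
set rows := fst @: S; set cols := (snd @: S) :\ p0.2.
have few_equations : (#|rows| + #|cols| < #|S|)%N.
  have rows2 : (2 * #|rows| <= #|S|)%N := double_card_imset_le row_partner.
  have cols2 : (2 * #|cols|.+1 <= #|S|)%N.
    by have := double_card_imset_le col_partner; rewrite (cardsD1 p0.2) imset_f.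
  lia.
have [d d_neq0] := nonzero_left_kernel
  (row_mx (incidence_mx R S fst rows) (incidence_mx R S snd cols)) few_equations.
rewrite mul_mx_row -row_mx0 => /eq_row_mx[d_rows d_cols].
pose D : 'M[R]_(m, n) := \matrix_(r, s) \sum_(i | enum_val i == (r, s)) d 0 i.
have D_supp r s : D r s != 0 -> (r, s) \in S.
  apply: contraR => rsS; rewrite mxE big_pred0 // => i.
  by apply: contraNF rsS => /eqP <-; exact: enum_valP.
have D_entry i : D (enum_val i).1 (enum_val i).2 = d 0 i.
  rewrite mxE -surjective_pairing (big_pred1 i) // => i'.
  by rewrite /= (inj_eq enum_val_inj).
have rows0 r : \sum_s D r s = 0.
  rewrite -[RHS](incidence_mx_ker d_rows (j := r)) ?setDv ?inE //.
  rewrite (partition_big (fun i => (enum_val i).2) predT) //=; apply: eq_bigr => s _.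
  by rewrite mxE; apply: eq_bigl => i; case: (enum_val i).
have other_cols0 s : s != p0.2 -> \sum_r D r s = 0.
  move=> s_neq; rewrite -[RHS](incidence_mx_ker d_cols (j := s)); last first.
    by rewrite !inE s_neq /= andNb.
  rewrite (partition_big (fun i => (enum_val i).1) predT) //=; apply: eq_bigr => r _.
  by rewrite mxE; apply: eq_bigl => i; case: (enum_val i) => a b /=; rewrite andbC.
exists D; split=> //.
- apply: contraNneq d_neq0 => D0; apply/eqP/rowP => i.
  by rewrite -D_entry D0 !mxE.
- split=> // s; have [->|] := eqVneq s p0.2; last exact: other_cols0.
  have total : \sum_s \sum_r D r s = 0 by rewrite exchange_big big1.
  by rewrite -[RHS]total (bigD1 p0.2) //= [X in _ = _ + X]big1 ?addr0.
Qed.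

Section FractionalEntries.
Variable R : realFieldType.

Lemma not_fractionalE (y : R) : 0 <= y <= 1 -> ~~ (0 < y < 1) -> y = (y == 1)%:R.
Proof.
case/andP=> y_ge0 y_le1; have [->//|y_neq1] := eqVneq y 1.
by rewrite lt_def y_ge0 lt_neqAle y_neq1 y_le1 !andbT negbK => /eqP.
Qed.

Lemma sum_eq1_le1 (I : finType) (F : I -> R) i :
  (forall x, 0 <= F x) -> \sum_x F x = 1 -> F i <= 1.
Proof.
by move=> F_ge0 <-; rewrite (bigD1 i) //= lerDl sumr_ge0.
Qed.

Lemma sum_eq1_fractional_other (I : finType) (F : I -> R) i :
  (forall x, 0 <= F x) -> \sum_x F x = 1 -> 0 < F i < 1 ->
  exists2 j, j != i & 0 < F j < 1.
Proof.
move=> F_ge0 F_sum1 /andP[Fi_gt0 Fi_lt1].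
have [/existsP[j /andP[]]|/existsPn no_other] :=
  boolP [exists j, (j != i) && (0 < F j < 1)]; first by exists j.
have others : \sum_(j | j != i) F j = (\sum_(j | j != i) (F j == 1%R))%N%:R.
  rewrite natr_sum; apply: eq_bigr => j j_neq; apply: not_fractionalE.
    by rewrite F_ge0 (sum_eq1_le1 _ F_ge0 F_sum1).
  by have := no_other j; rewrite j_neq.
move: F_sum1; rewrite (bigD1 i) //= others; case: (\sum_(j | _) _)%N => [|n].
  by rewrite addr0 => Fi1; move: Fi_lt1; rewrite Fi1 ltxx.
rewrite -natr1 => Fi_eq; have : 0 <= n%:R :> R by []; lra.
Qed.

Lemma sum_eq1_eq1_uniq (I : finType) (F : I -> R) i j :
  (forall x, 0 <= F x) -> \sum_x F x = 1 -> F i = 1 -> F j = 1 -> i = j.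
Proof.
move=> F_ge0 F_sum1 Fi1 Fj1; apply/eqP; apply: contraT => i_neq_j.
have : F i + F j <= \sum_x F x.
  by rewrite (bigD1 i) //= (bigD1 j) 1?eq_sym //= addrA lerDl sumr_ge0.
by rewrite F_sum1 Fi1 Fj1; lra.
Qed.

(* The largest t >= 0 with 0 <= y + t * d <= 1. *)
Definition max_step (y d : R) : R := if 0 < d then (1 - y) / d else y / - d.

Lemma max_step_gt0 y d : 0 < y < 1 -> d != 0 -> 0 < max_step y d.
Proof.
case/andP=> y_gt0 y_lt1 d_neq0; rewrite /max_step; case: ifPn => [d_gt0|].
  by rewrite divr_gt0 // subr_gt0.
by rewrite -leNgt le_eqVlt (negbTE d_neq0) /= => d_lt0; rewrite divr_gt0 ?oppr_gt0.
Qed.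

Lemma max_step_addr_ge0 y d t :
  0 <= y -> 0 <= t <= max_step y d -> 0 <= y + t * d.
Proof.
move=> y_ge0 /andP[t_ge0]; rewrite /max_step; case: ifPn => [d_gt0 _|].
  by rewrite addr_ge0 // mulr_ge0 // ltW.
rewrite -leNgt le_eqVlt => /orP[/eqP->|d_lt0]; first by rewrite mulr0 addr0.
by rewrite ler_pdivlMr ?oppr_gt0 // mulrN -subr_ge0 opprK addrC.
Qed.

Lemma max_step_not_fractional y d : d != 0 -> ~~ (0 < y + max_step y d * d < 1).
Proof.
move=> d_neq0; rewrite /max_step; case: ifPn => [d_gt0|_].
  by rewrite divfK // addrC subrK ltxx andbF.
by rewrite invrN mulrN mulNr divfK // subrr ltxx.
Qed.

End FractionalEntries.

Section DoublyStochastic.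
Variables (R : realFieldType) (k : nat).
Implicit Types (C D Y : 'M[R]_k).

Definition fractional_support Y : {set 'I_k * 'I_k} := [set p | 0 < Y p.1 p.2 < 1].

Definition frob_inner C Y : R := \sum_r \sum_s C r s * Y r s.

Lemma frob2_inner Y : frob2 Y = frob_inner Y Y.
Proof. by apply: eq_bigr => r _; apply: eq_bigr => s _; rewrite expr2. Qed.

Lemma frob_inner_perm_mx C (pi : 'S_k) : frob_inner C (perm_mx pi) = \sum_r C r (pi r).
Proof.
apply: eq_bigr => r _; rewrite (bigD1 (pi r)) //= big1 => [|s s_neq].
  by rewrite !mxE eqxx mulr1 addr0.
by rewrite !mxE eq_sym (negbTE s_neq) mulr0.
Qed.

Lemma frob_innerDZ C Y D t :
  frob_inner C (Y + t *: D) = frob_inner C Y + t * frob_inner C D.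
Proof.
rewrite /frob_inner mulr_sumr -big_split; apply: eq_bigr => r _.
rewrite mulr_sumr -big_split; apply: eq_bigr => s _.
by rewrite !mxE mulrDr mulrCA.
Qed.

Lemma frob_innerN C D : frob_inner C (- D) = - frob_inner C D.
Proof.
rewrite /frob_inner -sumrN; apply: eq_bigr => r _; rewrite -sumrN.
by apply: eq_bigr => s _; rewrite mxE mulrN.
Qed.

Lemma zero_marginsN D : zero_margins D -> zero_margins (- D).
Proof.
case=> rows0 cols0; split=> [r|s].
  by rewrite (eq_bigr (fun s => - D r s)) => [|s _]; rewrite ?mxE // sumrN rows0 oppr0.
by rewrite (eq_bigr (fun r => - D r s)) => [|r _]; rewrite ?mxE // sumrN cols0 oppr0.
Qed.

Lemma doubly_stochastic_addZ Y D t :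
  doubly_stochastic Y -> zero_margins D -> (forall i j, 0 <= Y i j + t * D i j) ->
  doubly_stochastic (Y + t *: D).
Proof.
case=> _ [rows1 cols1] [rows0 cols0] entries_ge0.
split; [|split] => [i j|r|s]; first by rewrite !mxE.
  by rewrite (eq_bigr (fun s => Y r s + t * D r s)) => [|s _]; rewrite ?mxE // big_split /=
    -mulr_sumr rows1 rows0 mulr0 addr0.
by rewrite (eq_bigr (fun r => Y r s + t * D r s)) => [|r _]; rewrite ?mxE // big_split /=
  -mulr_sumr cols1 cols0 mulr0 addr0.
Qed.

Lemma fractional_support_row_partner Y : doubly_stochastic Y ->
  {in fractional_support Y, forall p,
    exists2 q, q \in fractional_support Y & (q != p) && (q.1 == p.1)}.
Proof.
case=> Y_ge0 [rows1 _] [r s]; rewrite inE /= => rs_frac.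
have [s' s'_neq s'_frac] := sum_eq1_fractional_other (Y_ge0 r) (rows1 r) rs_frac.
by exists (r, s'); rewrite ?inE // xpair_eqE eqxx (negbTE s'_neq).
Qed.

Lemma fractional_support_col_partner Y : doubly_stochastic Y ->
  {in fractional_support Y, forall p,
    exists2 q, q \in fractional_support Y & (q != p) && (q.2 == p.2)}.
Proof.
case=> Y_ge0 [_ cols1] [r s]; rewrite inE /= => rs_frac.
have [r' r'_neq r'_frac] :=
  sum_eq1_fractional_other (fun r => Y_ge0 r s) (cols1 s) rs_frac.
by exists (r', s); rewrite ?inE // xpair_eqE eqxx (negbTE r'_neq).
Qed.

Lemma doubly_stochastic_perm_mx Y :
  doubly_stochastic Y -> fractional_support Y = set0 -> exists pi : 'S_k, Y = perm_mx pi.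
Proof.
case=> Y_ge0 [rows1 cols1] no_frac.
have Y01 r s : Y r s = (Y r s == 1)%:R.
  apply: not_fractionalE; first by rewrite Y_ge0 (sum_eq1_le1 _ (Y_ge0 r) (rows1 r)).
  by apply/negP => rs_frac; move: (in_set0 (r, s)); rewrite -no_frac inE rs_frac.
have /fin_all_exists[f f1] : forall r, exists s, Y r s = 1.
  move=> r; have /existsP[s /eqP] : [exists s, Y r s == 1].
    apply: contraT => /existsPn none; move: (rows1 r); rewrite big1 => [/eqP|s _].
      by rewrite eq_sym oner_eq0.
    by rewrite Y01 (negbTE (none s)).
  by exists s.
have f_inj : injective f.
  move=> r1 r2 f_eq; apply: (sum_eq1_eq1_uniq (fun r => Y_ge0 r (f r1)) (cols1 (f r1))).
    exact: f1.
  by rewrite f_eq f1.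
exists (perm f_inj); apply/matrixP => r s; rewrite !mxE permE.
have [<-|s_neq] := eqVneq (f r) s; first exact: f1.
rewrite Y01; case: eqP => // Yrs1.
by case/eqP: s_neq; exact: (sum_eq1_eq1_uniq (Y_ge0 r) (rows1 r)).
Qed.

Lemma fractional_support_descent Y D :
  doubly_stochastic Y -> D != 0 ->
  (forall r s, D r s != 0 -> (r, s) \in fractional_support Y) -> zero_margins D ->
  exists2 t, 0 <= t & doubly_stochastic (Y + t *: D) /\
    (#|fractional_support (Y + t *: D)| < #|fractional_support Y|)%N.
Proof.
move=> dsY D_neq0 D_supp D_margins; have Y_ge0 := proj1 dsY.
have /existsP[p0 Dp0] : [exists p : 'I_k * 'I_k, D p.1 p.2 != 0].
  apply: contraNT D_neq0 => /existsPn D0; apply/eqP/matrixP => r s.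
  by rewrite mxE; apply/eqP; rewrite -[_ == _]negbK (D0 (r, s)).
pose step p := max_step (Y p.1 p.2) (D p.1 p.2).
have [q Dq q_min] := arg_minP (P := fun p => D p.1 p.2 != 0) step Dp0.
have Yq_frac : q \in fractional_support Y by rewrite [q]surjective_pairing D_supp.
have t_ge0 : 0 <= step q by apply/ltW/max_step_gt0 => //; rewrite inE in Yq_frac.
set t := step q.
have entries i j : (Y + t *: D) i j = Y i j + t * D i j by rewrite !mxE.
exists t => //; split.
  apply: doubly_stochastic_addZ => // i j; have [->|Dij] := eqVneq (D i j) 0.
    by rewrite mulr0 addr0 Y_ge0.
  by apply: max_step_addr_ge0; rewrite ?Y_ge0 ?t_ge0 ?(q_min (i, j)).
apply/proper_card/properP; split.
  apply/subsetP => -[i j]; have [Dij0 | /D_supp //] := eqVneq (D i j) 0.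
  by rewrite !inE /= entries Dij0 mulr0 addr0.
by exists q; rewrite // inE entries max_step_not_fractional.
Qed.

Lemma doubly_stochastic_inner_le_perm C Y :
  doubly_stochastic Y -> exists pi : 'S_k, frob_inner C Y <= \sum_r C r (pi r).
Proof.
have [n] := ubnP #|fractional_support Y|; elim: n Y => // n IH Y frac_lt dsY.
have [no_frac|frac_neq0] := eqVneq (fractional_support Y) set0.
  have [pi ->] := doubly_stochastic_perm_mx dsY no_frac.
  by exists pi; rewrite frob_inner_perm_mx.
have [D [D_neq0 D_supp D_margins]] := exists_zero_margins_on R frac_neq0
  (fractional_support_row_partner dsY) (fractional_support_col_partner dsY).
wlog D_ascent : D D_neq0 D_supp D_margins / 0 <= frob_inner C D.
  move=> ascend; have [|CD_lt0] := lerP 0 (frob_inner C D); first exact: ascend.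
  apply: (ascend (- D)); first by rewrite oppr_eq0.
  - by move=> r s; rewrite mxE oppr_eq0; exact: D_supp.
  - exact: zero_marginsN.
  - by rewrite frob_innerN oppr_ge0 ltW.
have [t t_ge0 [dsY' frac_lt']] := fractional_support_descent dsY D_neq0 D_supp D_margins.
have [|pi le_pi] := IH _ _ dsY'; first exact: leq_trans frac_lt' frac_lt.
by exists pi; apply: le_trans le_pi; rewrite frob_innerDZ lerDl mulr_ge0.
Qed.

End DoublyStochastic.

Theorem mainTheorem4 (R : realFieldType) (k : nat) (A : 'M[R]_k) :
  doubly_stochastic A -> frob2 A <= k%:R * beta A.
Proof.
move=> dsA; have [pi inner_le] := doubly_stochastic_inner_le_perm A dsA.
case: k A dsA pi inner_le => [|k] A _ pi inner_le; first by rewrite /frob2 big_ord0 mul0r.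
rewrite /beta mulrA mulfV ?pnatr_eq0 // mul1r frob2_inner.
exact: le_trans inner_le (le_bigmax _ _ pi).
Qed.
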